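(* Let $X$ be a real Hausdorff locally convex topological vector space, let $f:X\to\overline{\mathbb R}$ be proper and let $U\subseteq\operatorname{dom} f$ be dense in $\operatorname{dom} f$. (a) $\overline{f_U}$ is lower semicontinuous, $U$ is graphically dense in $\operatorname{dom}\overline{f_U}$ with respect to $\overline{f_U}$, and $\inf_{x\in U}f(x)=\inf_{x\in X}\overline{f_U}(x)$. (b) If $f$ is lower semicontinuous on $U$, then $f(u)=\overline{f_U}(u)$ for all $u\in U$. If moreover $f$ is lower semicontinuous on $X$, then $\operatorname{dom}\overline{f_U}\subseteq\operatorname{dom} f$ and $\overline{f_U}(x)\ge f(x)$ for all $x\in X$; furthermore, in this case $\overline{f_U}=f$ on $X$ if and only if $U$ is graphically dense in $\operatorname{dom} f$ with respect to $f$. (c) If $\operatorname{dom} f$ is convex, $U$ is self-segment-dense in $\operatorname{dom} f$ and $f$ is convex on $U$, then $\overline{f_U}$ is convex and $\operatorname{epi} f_U$ is self-segment-dense in $\operatorname{epi}\overline{f_U}$.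
   Context: $\overline{\mathbb R}=\mathbb R\cup\{\pm\infty\}$; $\operatorname{dom} f=\{x:f(x)<+\infty\}$; $\operatorname{epi} f=\{(x,r)\in X\times\mathbb R:f(x)\le r\}$; $f$ is proper if $\operatorname{dom} f\ne\emptyset$ and $f>-\infty$ everywhere. For $U\subseteq\operatorname{dom} f$: $\operatorname{epi} f_U=\{(u,r)\in U\times\mathbb R: f(u)\le r\}$ and $\overline{f_U}:X\to\overline{\mathbb R}$ is the function whose epigraph is $\operatorname{cl}(\operatorname{epi} f_U)$ (closure in $X\times\mathbb R$), i.e. $\overline{f_U}(x)=\inf\{r:(x,r)\in\operatorname{cl}(\operatorname{epi} f_U)\}$ with $\inf\emptyset=+\infty$. Lower semicontinuity at $x$: for every net $x_i\to x$, $\liminf f(x_i)\ge f(x)$; ''lower semicontinuous on $U$'' means lower semicontinuous at each point of $U$ (with respect to nets in $U$). Given a function $g$ and $U\subseteq\operatorname{dom} g$, $U$ is graphically dense in $\operatorname{dom} g$ (w.r.t. $g$) if for every $x\in\operatorname{dom} g$ there is a net $(u_i)\subseteq U$ with $u_i\to x$ and $g(u_i)\to g(x)$. $f$ is convex on $U$ if $f((1-t)u+tv)\le(1-t)f(u)+tf(v)$ whenever $u,v\in U$, $t\in[0,1]$ and $(1-t)u+tv\in U$ ($U$ need not be convex). Convexity of $\overline{\mathbb R}$-valued functions uses the conventions $(+\infty)+(-\infty)=+\infty$, $0\cdot(+\infty)=+\infty$, $0\cdot(-\infty)=0$. $[x,y]=\{x+t(y-x):t\in[0,1]\}$. Self-segment-dense: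 for convex $V$ and $U\subseteq V$, $U$ is self-segment-dense in $V$ if $V\subseteq\operatorname{cl}U$ and for all $x,y\in U$, $[x,y]\cap U$ is dense in $[x,y]$. *)

From Stdlib Require Import Reals Classical ClassicalEpsilon.
Open Scope R_scope.

Inductive ER : Type := ERfin (x : R) | ERpinf | ERninf.

Definition ERle (a b : ER) : Prop :=
  match a, b with
  | ERninf, _ => True
  | _, ERpinf => True
  | ERfin x, ERfin y => x <= y
  | _, _ => False
  end.

Definition ERlt (a b : ER) : Prop := ERle a b /\ a <> b.

(* addition with the convention (+oo) + (-oo) = +oo *)
Definition ERplus (a b : ER) : ER :=
  match a, b with
  | ERpinf, _ => ERpinf
  | _, ERpinf => ERpinf
  | ERninf, _ => ERninf
  | _, ERninf => ERninf
  | ERfin x, ERfin y => ERfin (x + y)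
  end.

(* scalar multiplication by a real, with 0*(+oo) = +oo and 0*(-oo) = 0 *)
Definition ERscal (t : R) (a : ER) : ER :=
  match a with
  | ERfin x => ERfin (t * x)
  | ERpinf => if Req_EM_T t 0 then ERpinf
              else if Rlt_dec 0 t then ERpinf else ERninf
  | ERninf => if Req_EM_T t 0 then ERfin 0
              else if Rlt_dec 0 t then ERninf else ERpinf
  end.

Definition is_glb (S : ER -> Prop) (m : ER) : Prop :=
  (forall s, S s -> ERle m s) /\ (forall m', (forall s, S s -> ERle m' s) -> ERle m' m).
Definition is_lub (S : ER -> Prop) (m : ER) : Prop :=
  (forall s, S s -> ERle s m) /\ (forall m', (forall s, S s -> ERle s m') -> ERle m m').

(* infimum / supremum in the extended reals (they always exist; inf of the
   empty set is +oo, sup of the empty set is -oo) *)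
Definition ERinf (S : ER -> Prop) : ER := epsilon (inhabits ERpinf) (is_glb S).
Definition ERsup (S : ER -> Prop) : ER := epsilon (inhabits ERninf) (is_lub S).

Definition R_open (A : R -> Prop) : Prop :=
  forall x, A x -> exists eps, 0 < eps /\ forall y, Rabs (y - x) < eps -> A y.

Definition prod_open {A B : Type} (opA : (A -> Prop) -> Prop) (opB : (B -> Prop) -> Prop)
  (W : A * B -> Prop) : Prop :=
  forall p, W p -> exists U V, opA U /\ opB V /\ U (fst p) /\ V (snd p) /\
     forall a b, U a -> V b -> W (a, b).

Definition continuous {A B : Type} (opA : (A -> Prop) -> Prop) (opB : (B -> Prop) -> Prop)
  (f : A -> B) : Prop :=
  forall W, opB W -> opA (fun a => W (f a)).

Definition closure {A : Type} (opA : (A -> Prop) -> Prop) (S : A -> Prop) (p : A) : Prop :=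
  forall W, opA W -> W p -> exists q, W q /\ S q.

Record HLCTVS : Type := {
  carrier :> Type;
  vzero : carrier;
  vadd : carrier -> carrier -> carrier;
  vscal : R -> carrier -> carrier;
  vadd_assoc : forall x y z, vadd x (vadd y z) = vadd (vadd x y) z;
  vadd_comm : forall x y, vadd x y = vadd y x;
  vadd_0 : forall x, vadd x vzero = x;
  vadd_opp : forall x, vadd x (vscal (-1) x) = vzero;
  vscal_assoc : forall a b x, vscal a (vscal b x) = vscal (a * b) x;
  vscal_1 : forall x, vscal 1 x = x;
  vscal_distr_l : forall a x y, vscal a (vadd x y) = vadd (vscal a x) (vscal a y);
  vscal_distr_r : forall a b x, vscal (a + b) x = vadd (vscal a x) (vscal b x);
  vopen : (carrier -> Prop) -> Prop;
  vopen_full : vopen (fun _ => True);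
  vopen_inter : forall A B, vopen A -> vopen B -> vopen (fun x => A x /\ B x);
  vopen_union : forall F : (carrier -> Prop) -> Prop,
      (forall A, F A -> vopen A) -> vopen (fun x => exists A, F A /\ A x);
  vadd_cont : continuous (prod_open vopen vopen) vopen (fun p => vadd (fst p) (snd p));
  vscal_cont : continuous (prod_open R_open vopen) vopen (fun p => vscal (fst p) (snd p));
  hausdorff : forall x y, x <> y ->
      exists A B, vopen A /\ vopen B /\ A x /\ B y /\ forall z, ~ (A z /\ B z);
  locally_convex : forall A, vopen A -> A vzero ->
      exists B, vopen B /\ B vzero /\ (forall x, B x -> A x) /\
        (forall x y t, 0 <= t <= 1 -> B x -> B y ->
           B (vadd (vscal (1 - t) x) (vscal t y)))
}.

Arguments vzero {_}. Arguments vadd {_}. Arguments vscal {_}. Arguments vopen {_}.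

Definition directed {I : Type} (le : I -> I -> Prop) : Prop :=
  inhabited I /\ (forall i, le i i) /\ (forall i j k, le i j -> le j k -> le i k) /\
  (forall i j, exists k, le i k /\ le j k).

Definition net_conv {I A : Type} (le : I -> I -> Prop) (opA : (A -> Prop) -> Prop)
  (u : I -> A) (x : A) : Prop :=
  forall W, opA W -> W x -> exists i0, forall i, le i0 i -> W (u i).

Definition ER_net_conv {I : Type} (le : I -> I -> Prop) (a : I -> ER) (l : ER) : Prop :=
  match l with
  | ERfin x => forall eps, 0 < eps -> exists i0, forall i, le i0 i ->
                 exists y, a i = ERfin y /\ Rabs (y - x) < eps
  | ERpinf => forall M, exists i0, forall i, le i0 i -> ERlt (ERfin M) (a i)
  | ERninf => forall M, exists i0, forall i, le i0 i -> ERlt (a i) (ERfin M)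
  end.

Definition net_liminf {I : Type} (le : I -> I -> Prop) (a : I -> ER) : ER :=
  ERsup (fun s => exists i, s = ERinf (fun t => exists j, le i j /\ t = a j)).

Section Notions.
Variable X : HLCTVS.

Definition dom (f : X -> ER) (x : X) : Prop := f x <> ERpinf.

Definition proper (f : X -> ER) : Prop :=
  (exists x, dom f x) /\ (forall x, f x <> ERninf).

Definition XR_open : (X * R -> Prop) -> Prop := prod_open vopen R_open.

Definition epi_U (f : X -> ER) (U : X -> Prop) (p : X * R) : Prop :=
  U (fst p) /\ ERle (f (fst p)) (ERfin (snd p)).

Definition epi (g : X -> ER) (p : X * R) : Prop := ERle (g (fst p)) (ERfin (snd p)).

Definition fbar (f : X -> ER) (U : X -> Prop) (x : X) : ER :=
  ERinf (fun s => exists r, s = ERfin r /\ closure XR_open (epi_U f U) (x, r)).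

Definition lsc_on (f : X -> ER) (U : X -> Prop) : Prop :=
  forall x, U x ->
  forall (I : Type) (le : I -> I -> Prop) (u : I -> X),
    directed le -> (forall i, U (u i)) -> net_conv le vopen u x ->
    ERle (f x) (net_liminf le (fun i => f (u i))).

(* U graphically dense in dom g (w.r.t. g); includes the standing U ⊆ dom g *)
Definition graphically_dense (g : X -> ER) (U : X -> Prop) : Prop :=
  (forall u, U u -> dom g u) /\
  forall x, dom g x ->
    exists (I : Type) (le : I -> I -> Prop) (u : I -> X),
      directed le /\ (forall i, U (u i)) /\ net_conv le vopen u x /\
      ER_net_conv le (fun i => g (u i)) (g x).

Definition convex_on (f : X -> ER) (U : X -> Prop) : Prop :=
  forall u v t, U u -> U v -> 0 <= t <= 1 ->
    U (vadd (vscal (1 - t) u) (vscal t v)) ->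
    ERle (f (vadd (vscal (1 - t) u) (vscal t v)))
         (ERplus (ERscal (1 - t) (f u)) (ERscal t (f v))).

Definition convex_fun (f : X -> ER) : Prop := convex_on f (fun _ => True).

End Notions.

Definition convex_set {A : Type} (add : A -> A -> A) (scal : R -> A -> A)
  (C : A -> Prop) : Prop :=
  forall x y t, C x -> C y -> 0 <= t <= 1 -> C (add (scal (1 - t) x) (scal t y)).

Definition segment {A : Type} (add : A -> A -> A) (scal : R -> A -> A)
  (x y : A) (z : A) : Prop :=
  exists t, 0 <= t <= 1 /\ z = add x (scal t (add y (scal (-1) x))).

Definition self_segment_dense {A : Type} (op : (A -> Prop) -> Prop)
  (add : A -> A -> A) (scal : R -> A -> A) (V U : A -> Prop) : Prop :=
  convex_set add scal V /\ (forall u, U u -> V u) /\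
  (forall v, V v -> closure op U v) /\
  (forall x y, U x -> U y ->
     forall z, segment add scal x y z ->
       closure op (fun w => segment add scal x y w /\ U w) z).

Definition XR_add {X : HLCTVS} (p q : X * R) : X * R :=
  (vadd (fst p) (fst q), snd p + snd q).
Definition XR_scal {X : HLCTVS} (t : R) (p : X * R) : X * R :=
  (vscal t (fst p), t * snd p).

From Pilot Require Import Defs.
From Stdlib Require Import Reals Lra Lia Classical ClassicalEpsilon
  FunctionalExtensionality PropExtensionality.
Open Scope R_scope.

(* The epigraph of [fbar f U] is the closure of [epi_U f U].  Closedness of this
   set is lower semicontinuity of [fbar f U]; a point (x, r) of the closure is a
   limit of points (u_i, r_i) with [u_i] in U and [f u_i <= r_i], and such nets
   give graphical density, the equality of infima, and (when f is lower
   semicontinuous) [f <= fbar f U].  For (c), density of U in the segments between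
   its points, together with convexity of f on U, makes [epi_U f U] dense in the
   segments between its own points; the closure of such a set is convex. *)

(** * Extended reals *)

Lemma ERle_trans a b c : ERle a b -> ERle b c -> ERle a c.
Proof. destruct a, b, c; simpl; auto; try tauto; lra. Qed.

Lemma ERle_antisym a b : ERle a b -> ERle b a -> a = b.
Proof. destruct a, b; simpl; try tauto; intros; f_equal; lra. Qed.

Lemma ERle_pinf a : ERle a ERpinf.
Proof. destruct a; simpl; auto. Qed.

Lemma ERninf_le a : ERle ERninf a.
Proof. destruct a; simpl; auto. Qed.

Lemma ERpinf_le a : ERle ERpinf a -> a = ERpinf.
Proof. destruct a; simpl; tauto. Qed.

Lemma ERle_fin_trans a x y : ERle a (ERfin x) -> x <= y -> ERle a (ERfin y).
Proof. destruct a; simpl; auto; lra. Qed.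

Lemma ERlt_fin_of_le a x y : ERle a (ERfin x) -> x < y -> ERlt a (ERfin y).
Proof. intros Hax Hxy; split; [eapply ERle_fin_trans; eauto; lra|intros ->; simpl in Hax; lra]. Qed.

Lemma ERle_approx_above a b :
  (forall c, ERlt b (ERfin c) -> ERle a (ERfin c)) -> ERle a b.
Proof.
  intros H. destruct b as [y| |]; [|apply ERle_pinf|].
  - destruct a as [x| |]; simpl; auto.
    + destruct (Rle_dec x y) as [|Hyx]; auto.
      enough (x <= (x + y) / 2) by lra.
      apply (H ((x + y) / 2)). split; simpl; [lra|intros E; inversion E; lra].
    + apply (H (y + 1)). split; simpl; [lra|intros E; inversion E; lra].
  - destruct a as [x| |]; simpl; auto.
    + enough (x <= x - 1) by lra. apply (H (x - 1)). split; simpl; auto. discriminate.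
    + apply (H 0). split; simpl; auto. discriminate.
Qed.

Lemma ERle_approx_below a b :
  (forall c, ERlt (ERfin c) a -> ERle (ERfin c) b) -> ERle a b.
Proof.
  intros H. destruct a as [x| |]; [| |apply ERninf_le].
  - destruct b as [y| |]; simpl; auto.
    + destruct (Rle_dec x y) as [|Hyx]; auto.
      enough ((x + y) / 2 <= y) by lra.
      apply (H ((x + y) / 2)). split; simpl; [lra|intros E; inversion E; lra].
    + apply (H (x - 1)). split; simpl; [lra|intros E; inversion E; lra].
  - destruct b as [y| |]; simpl; auto.
    + enough (y + 1 <= y) by lra. apply (H (y + 1)). split; simpl; auto. discriminate.
    + apply (H 0). split; simpl; auto. discriminate.
Qed.

Definition ERopp (a : ER) : ER :=
  match a with ERfin x => ERfin (- x) | ERpinf => ERninf | ERninf => ERpinf end.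

Lemma ERopp_involutive a : ERopp (ERopp a) = a.
Proof. destruct a; simpl; rewrite ?Ropp_involutive; reflexivity. Qed.

Lemma ERle_opp a b : ERle (ERopp a) (ERopp b) -> ERle b a.
Proof. destruct a, b; simpl; auto; lra. Qed.

Lemma ERlub_exists (S : ER -> Prop) : exists m, Defs.is_lub S m.
Proof.
  destruct (classic (S ERpinf)) as [Hpinf|Hpinf].
  { exists ERpinf. split; [intros; apply ERle_pinf|intros m Hm; exact (Hm _ Hpinf)]. }
  destruct (classic (exists r, S (ERfin r))) as [[r0 Hr0]|Hnone].
  2: { exists ERninf. split; [|intros; apply ERninf_le].
       intros [r| |] Hs; simpl; auto. apply Hnone; eauto. }
  destruct (classic (bound (fun r => S (ERfin r)))) as [Hbd|Hunbd].
  - destruct (completeness _ Hbd (ex_intro _ r0 Hr0)) as [l [Hub Hleast]].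
    exists (ERfin l). split.
    + intros [r| |] Hs; simpl; [apply Hub, Hs|contradiction|auto].
    + intros [y| |] Hm; simpl; auto; [|exact (Hm _ Hr0)].
      apply Hleast. intros r Hr. exact (Hm _ Hr).
  - exists ERpinf. split; [intros; apply ERle_pinf|].
    intros [y| |] Hm; simpl; auto; [|exact (Hm _ Hr0)].
    apply Hunbd. exists y. intros r Hr. exact (Hm _ Hr).
Qed.

Lemma ERglb_exists (S : ER -> Prop) : exists m, Defs.is_glb S m.
Proof.
  destruct (ERlub_exists (fun s => S (ERopp s))) as [m [Hub Hleast]].
  exists (ERopp m). split.
  - intros s Hs. apply ERle_opp. rewrite ERopp_involutive.
    apply Hub. rewrite ERopp_involutive. exact Hs.
  - intros m' Hm'. apply ERle_opp. rewrite ERopp_involutive.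
    apply Hleast. intros s Hs. apply ERle_opp. rewrite ERopp_involutive. exact (Hm' _ Hs).
Qed.

Lemma ERinf_lb S s : S s -> ERle (ERinf S) s.
Proof. apply (proj1 (epsilon_spec _ _ (ERglb_exists S))). Qed.

Lemma ERinf_glb S m : (forall s, S s -> ERle m s) -> ERle m (ERinf S).
Proof. apply (proj2 (epsilon_spec _ _ (ERglb_exists S))). Qed.

Lemma ERsup_ub S s : S s -> ERle s (ERsup S).
Proof. apply (proj1 (epsilon_spec _ _ (ERlub_exists S))). Qed.

Lemma ERsup_lub S m : (forall s, S s -> ERle s m) -> ERle (ERsup S) m.
Proof. apply (proj2 (epsilon_spec _ _ (ERlub_exists S))). Qed.

Lemma net_liminf_le {I} (le : I -> I -> Prop) (a : I -> ER) c :
  (forall i, ERle (ERinf (fun t => exists j, le i j /\ t = a j)) c) ->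
  ERle (net_liminf le a) c.
Proof. intros H. apply ERsup_lub. intros s [i ->]. apply H. Qed.

Lemma le_net_liminf {I} (le : I -> I -> Prop) (a : I -> ER) c i :
  (forall j, le i j -> ERle c (a j)) -> ERle c (net_liminf le a).
Proof.
  intros H. eapply ERle_trans; [|apply ERsup_ub; exists i; reflexivity].
  apply ERinf_glb. intros s [j [Hj ->]]. auto.
Qed.

Lemma ERconvex_comb_lt_fin a b t c : 0 <= t <= 1 ->
  ERlt (ERplus (ERscal (1 - t) a) (ERscal t b)) (ERfin c) ->
  exists p q, ERle a (ERfin p) /\ ERle b (ERfin q) /\ (1 - t) * p + t * q <= c.
Proof.
  intros Ht [H Hne].
  destruct a as [x| |], b as [y| |]; simpl in H, Hne |- *;
  repeat (destruct Req_EM_T; simpl in H, Hne |- *);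
  repeat (destruct Rlt_dec; simpl in H, Hne |- *); try contradiction; try lra.
  - exists x, y; repeat split; lra.
  - exists x, 0; repeat split; subst; lra.
  - exists x, ((c - (1-t)*x)/t); repeat split; try lra. field_simplify; lra.
  - exists 0, y; repeat split; lra.
  - exists ((c - t*y)/(1-t)), y; repeat split; try lra. field_simplify; lra.
  - exists 0, c; repeat split; assert (t = 1) by lra; subst; lra.
  - exists (c/(1-t)), 0; repeat split. subst. field_simplify; lra.
  - exists c, c; repeat split; lra.
Qed.

Lemma inv_INR_S_pos n : 0 < / INR (S n).
Proof. apply Rinv_0_lt_compat, lt_0_INR; lia. Qed.

Lemma inv_INR_S_le n m : (n <= m)%nat -> / INR (S m) <= / INR (S n).
Proof. intros H. apply Rinv_le_contravar; [apply lt_0_INR; lia|apply le_INR; lia]. Qed.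

Lemma inv_INR_S_lt eps : 0 < eps -> exists N, / INR (S N) < eps.
Proof.
  intros Heps. destruct (archimed_cor1 eps Heps) as [[|N] [HN HN0]]; [lia|eauto].
Qed.

Section VectorAlgebra.
Context {X : HLCTVS}.
Implicit Types (u v x d : X) (t : R).

Lemma vadd_0_l x : vadd vzero x = x.
Proof. rewrite vadd_comm. apply vadd_0. Qed.

Lemma vscal_0_l x : vscal 0 x = vzero.
Proof.
  assert (H : vscal 0 x = vadd (vscal 0 x) (vscal 0 x)).
  { rewrite <- vscal_distr_r. f_equal. ring. }
  rewrite <- (vadd_0 X (vscal 0 x)), <- (vadd_opp X (vscal 0 x)), vadd_assoc, <- H.
  reflexivity.
Qed.

Lemma vscal_0_r t : vscal t (@vzero X) = vzero.
Proof. rewrite <- (vscal_0_l vzero), vscal_assoc. f_equal. ring. Qed.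

Lemma segment_point_eq u v t :
  vadd u (vscal t (vadd v (vscal (-1) u))) = vadd (vscal (1 - t) u) (vscal t v).
Proof.
  rewrite vscal_distr_l, vscal_assoc, (vadd_comm X (vscal t v)), vadd_assoc.
  rewrite <- (vscal_1 X u) at 1. rewrite <- vscal_distr_r. f_equal. f_equal. ring.
Qed.

Lemma line_point_sub u d t t' :
  vadd (vadd u (vscal t' d)) (vscal (-1) (vadd u (vscal t d))) = vscal (t' - t) d.
Proof.
  rewrite vscal_distr_l, vscal_assoc, (vadd_comm X u (vscal t' d)), <- vadd_assoc,
    (vadd_assoc X u), vadd_opp, vadd_0_l, <- vscal_distr_r.
  f_equal. ring.
Qed.

End VectorAlgebra.

(** * Topology of X and of X * R *)

Lemma closure_incl {A} (op : (A -> Prop) -> Prop) (S : A -> Prop) p : S p -> closure op S p.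
Proof. intros Hp W _ HW. exists p; auto. Qed.

Lemma closure_mono {A} (op : (A -> Prop) -> Prop) (S T : A -> Prop) p :
  (forall q, S q -> T q) -> closure op S p -> closure op T p.
Proof. intros H Hp W HW Wp. destruct (Hp W HW Wp) as [q [Hq1 Hq2]]. exists q; auto. Qed.

Lemma R_open_ball c d : R_open (fun b => Rabs (b - c) < d).
Proof.
  intros x Hx. exists (d - Rabs (x - c)). split; [lra|].
  intros y Hy. pose proof (Rabs_triang (y - x) (x - c)) as Htri.
  replace (y - x + (x - c)) with (y - c) in Htri by ring. lra.
Qed.

Lemma R_open_lt c : R_open (fun b => b < c).
Proof.
  intros x Hx. exists (c - x). split; [lra|].
  intros y Hy. pose proof (Rle_abs (y - x)). lra.
Qed.

Section Topology.
Context {X : HLCTVS}.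

Lemma vopen_of_local (N : X -> Prop) :
  (forall x, N x -> exists A, vopen A /\ A x /\ forall y, A y -> N y) -> vopen N.
Proof.
  intros H.
  replace N with (fun x => exists A, (vopen A /\ forall y, A y -> N y) /\ A x).
  - apply vopen_union. intros A [HA _]; auto.
  - apply functional_extensionality. intros x. apply propositional_extensionality. split.
    + intros [A [[_ HAN] HAx]]. auto.
    + intros Hx. destruct (H x Hx) as [A [HA [HAx HAN]]]. exists A. auto.
Qed.

Lemma vopen_preimage_scal (S : X -> Prop) c : vopen S -> vopen (fun y => S (vscal c y)).
Proof.
  intros HS. apply vopen_of_local. intros x Hx.
  destruct (vscal_cont X S HS (c, x) Hx) as [V [A [_ [HA [HVc [HAx HVA]]]]]].
  exists A. repeat split; auto. intros y Hy. exact (HVA c y HVc Hy).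
Qed.

Lemma vopen_preimage_add (S : X -> Prop) w : vopen S -> vopen (fun y => S (vadd y w)).
Proof.
  intros HS. apply vopen_of_local. intros x Hx.
  destruct (vadd_cont X S HS (x, w) Hx) as [A [B [HA [_ [HAx [HBw HAB]]]]]].
  exists A. repeat split; auto. intros y Hy. exact (HAB y w Hy HBw).
Qed.

Lemma vcomb_continuous a b (x y : X) (A : X -> Prop) :
  vopen A -> A (vadd (vscal a x) (vscal b y)) ->
  exists A1 A2, vopen A1 /\ vopen A2 /\ A1 x /\ A2 y /\
    forall x' y', A1 x' -> A2 y' -> A (vadd (vscal a x') (vscal b y')).
Proof.
  intros HA Hxy.
  destruct (vadd_cont X A HA (vscal a x, vscal b y) Hxy)
    as [B1 [B2 [HB1 [HB2 [H1 [H2 H12]]]]]].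
  exists (fun x' => B1 (vscal a x')), (fun y' => B2 (vscal b y')).
  repeat split; auto using vopen_preimage_scal.
  intros x' y' Hx' Hy'. exact (H12 _ _ Hx' Hy').
Qed.

Lemma XR_open_box (A : X -> Prop) (B : R -> Prop) :
  vopen A -> R_open B -> XR_open X (fun p => A (fst p) /\ B (snd p)).
Proof. intros HA HB p [Hp1 Hp2]. exists A, B. repeat split; auto. Qed.

Lemma XR_open_nbhd_box (W : X * R -> Prop) p :
  XR_open X W -> W p -> exists A d, vopen A /\ A (fst p) /\ 0 < d /\
    forall a b, A a -> Rabs (b - snd p) < d -> W (a, b).
Proof.
  intros HW Hp. destruct (HW p Hp) as [A [B [HA [HB [HA1 [HB1 HAB]]]]]].
  destruct (HB _ HB1) as [d [Hd HdB]].
  exists A, d. repeat split; auto.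
Qed.

(* A convex 0-neighbourhood avoiding [d] (Hausdorff + local convexity) contains
   no [mu d] with [mu >= 1]; this makes the coordinate of the line [t |-> u + t d]
   continuous. *)
Lemma line_coordinate_nbhd (u d : X) t eps :
  d <> vzero -> 0 < eps ->
  exists N, vopen N /\ N (vadd u (vscal t d)) /\
    forall t', N (vadd u (vscal t' d)) -> Rabs (t' - t) < eps.
Proof.
  intros Hd Heps.
  destruct (hausdorff X vzero d (fun E => Hd (eq_sym E)))
    as [A0 [B0 [HA0 [HB0 [HA0z [HB0d Hdisj]]]]]].
  destruct (locally_convex X A0 HA0 HA0z) as [B [HB [HBz [HBA Hconv]]]].
  set (S := fun x => B x /\ B (vscal (-1) x)).
  assert (HS : vopen S) by (apply vopen_inter; auto using vopen_preimage_scal).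
  assert (Hbig : forall mu, 1 <= mu -> ~ B (vscal mu d)).
  { intros mu Hmu HBmu.
    assert (Hd' : B (vadd (vscal (1 - / mu) vzero) (vscal (/ mu) (vscal mu d)))).
    { apply Hconv; auto. split; [left; apply Rinv_0_lt_compat; lra|].
      rewrite <- Rinv_1. apply Rinv_le_contravar; lra. }
    rewrite vscal_0_r, vadd_0_l, vscal_assoc, Rinv_l, vscal_1 in Hd' by lra.
    apply (Hdisj d). auto. }
  assert (Hsmall : forall la, S (vscal la d) -> Rabs la < 1).
  { intros la [H1 H2]. apply Rnot_le_lt. intros Hla.
    destruct (Rle_dec 0 la).
    - rewrite Rabs_right in Hla by lra. apply (Hbig la); auto.
    - rewrite Rabs_left in Hla by lra. rewrite vscal_assoc in H2.
      apply (Hbig (-1 * la)); auto; lra. }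
  exists (fun y => S (vscal (/ eps) (vadd y (vscal (-1) (vadd u (vscal t d)))))).
  split; [|split].
  - apply (vopen_preimage_add (fun x => S (vscal (/ eps) x))), vopen_preimage_scal, HS.
  - rewrite vadd_opp, vscal_0_r. unfold S. rewrite vscal_0_r. auto.
  - intros t' Ht'. rewrite line_point_sub, vscal_assoc in Ht'.
    apply Hsmall in Ht'. rewrite Rabs_mult, Rabs_inv, (Rabs_right eps) in Ht' by lra.
    apply Rmult_lt_compat_l with (r := eps) in Ht'; auto.
    field_simplify in Ht'; lra.
Qed.

End Topology.

Lemma eventually_and {I} (le : I -> I -> Prop) (P Q : I -> Prop) : directed le ->
  (exists i0, forall i, le i0 i -> P i) -> (exists i0, forall i, le i0 i -> Q i) ->
  exists i0, forall i, le i0 i -> P i /\ Q i.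
Proof.
  intros [_ [_ [Htrans Hjoin]]] [i1 H1] [i2 H2].
  destruct (Hjoin i1 i2) as [k [Hk1 Hk2]]. exists k. intros i Hi. split.
  - apply H1. eapply Htrans; eauto.
  - apply H2. eapply Htrans; eauto.
Qed.

(* The index set of the nets built from closure points: a neighbourhood of [x]
   that the net must enter, and a precision level that must grow. *)
Record nbhd_index {X : HLCTVS} (x : X) := NbhdIndex {
  ni_set : X -> Prop; ni_level : nat; ni_open : vopen ni_set; ni_mem : ni_set x }.
Arguments NbhdIndex {X} x. Arguments ni_set {X x}. Arguments ni_level {X x}.
Arguments ni_open {X x}. Arguments ni_mem {X x}.

Definition nbhd_index_le {X : HLCTVS} (x : X) (i j : nbhd_index x) : Prop :=
  (forall y, ni_set j y -> ni_set i y) /\ (ni_level i <= ni_level j)%nat.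

Section NbhdNets.
Context {X : HLCTVS} (x : X).

Lemma nbhd_index_directed : directed (nbhd_index_le x).
Proof.
  split; [|split; [|split]].
  - exact (inhabits (NbhdIndex x (fun _ => True) 0 (vopen_full X) Logic.I)).
  - intros i. split; auto.
  - intros i j k [H1 H2] [H3 H4]. split; auto. lia.
  - intros i j. exists (NbhdIndex x (fun y => ni_set i y /\ ni_set j y)
      (Nat.max (ni_level i) (ni_level j))
      (vopen_inter X _ _ (ni_open i) (ni_open j)) (conj (ni_mem i) (ni_mem j))).
    unfold nbhd_index_le; simpl. repeat split; try tauto; lia.
Qed.

Lemma nbhd_index_net_conv (u : nbhd_index x -> X) :
  (forall i, ni_set i (u i)) -> net_conv (nbhd_index_le x) vopen u x.
Proof.
  intros Hu W HW HWx. exists (NbhdIndex x W 0 HW HWx). intros i [Hi _]. apply Hi, Hu.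
Qed.

Lemma nbhd_index_level_unbounded N :
  exists i0, forall i, nbhd_index_le x i0 i -> (N <= ni_level i)%nat.
Proof.
  exists (NbhdIndex x (fun _ => True) N (vopen_full X) Logic.I). intros i [_ Hi]. exact Hi.
Qed.

End NbhdNets.

Definition upper_approx (a : ER) (n : nat) : R :=
  match a with ERfin y => y + / INR (S n) | _ => - INR n end.

Lemma upper_approx_ge a n : a <> ERpinf -> ERle a (ERfin (upper_approx a n)).
Proof. intros Ha. pose proof (inv_INR_S_pos n). destruct a; cbn -[INR]; [lra|now apply Ha|auto]. Qed.

Lemma ER_net_conv_squeeze {I} (le : I -> I -> Prop) (b : I -> ER) a (m : I -> nat) :
  directed le -> a <> ERpinf ->
  (forall c, ERlt (ERfin c) a -> exists i0, forall i, le i0 i -> ERle (ERfin c) (b i)) ->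
  (forall i, ERle (b i) (ERfin (upper_approx a (m i) + / INR (S (m i))))) ->
  (forall N, exists i0, forall i, le i0 i -> (N <= m i)%nat) ->
  ER_net_conv le b a.
Proof.
  intros Hdir Ha Hlow Hup Hm. destruct a as [y| |]; cbn -[INR] in Hup |- *; [|contradiction|].
  - intros eps Heps.
    destruct (inv_INR_S_lt (eps / 4)) as [N HN]; [lra|].
    assert (Hc : ERlt (ERfin (y - eps / 2)) (ERfin y))
      by (apply ERlt_fin_of_le with (x := y - eps / 2); simpl; lra).
    destruct (eventually_and le _ _ Hdir (Hlow _ Hc) (Hm N)) as [i0 Hi0].
    exists i0. intros i Hi. destruct (Hi0 i Hi) as [Hlo HmN].
    pose proof (Hup i) as Hhi. pose proof (inv_INR_S_le _ _ HmN).
    destruct (b i) as [z| |]; cbn -[INR] in Hlo, Hhi; try contradiction.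
    exists z. split; auto. apply Rabs_def1; lra.
  - intros M. destruct (INR_unbounded (1 - M)) as [N HN].
    destruct (Hm N) as [i0 Hi0]. exists i0. intros i Hi.
    apply ERlt_fin_of_le with (x := - INR (m i) + / INR (S (m i))); [apply Hup|].
    pose proof (le_INR _ _ (Hi0 i Hi)). pose proof (inv_INR_S_le _ _ (Nat.le_0_l (m i))).
    simpl in *. lra.
Qed.

(** * Segment density and convexity *)

Definition segments_dense {A : Type} (op : (A -> Prop) -> Prop)
  (add : A -> A -> A) (scal : R -> A -> A) (S : A -> Prop) : Prop :=
  forall x y, S x -> S y -> forall z, segment add scal x y z ->
    closure op (fun w => segment add scal x y w /\ S w) z.

Section SegmentDensity.
Context {X : HLCTVS}.

Lemma segments_dense_param (U : X -> Prop) u v t (A : X -> Prop) eps :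
  segments_dense vopen vadd vscal U -> U u -> U v -> 0 <= t <= 1 -> vopen A ->
  A (vadd u (vscal t (vadd v (vscal (-1) u)))) -> 0 < eps ->
  exists t', 0 <= t' <= 1 /\ Rabs (t' - t) < eps /\
    U (vadd u (vscal t' (vadd v (vscal (-1) u)))) /\
    A (vadd u (vscal t' (vadd v (vscal (-1) u)))).
Proof.
  intros Hseg Hu Hv Ht HA HAz Heps.
  destruct (classic (vadd v (vscal (-1) u) = vzero)) as [Hvu|Hvu].
  - exists t. rewrite Rminus_diag, Rabs_R0. rewrite Hvu, vscal_0_r, vadd_0 in HAz |- *.
    auto.
  - destruct (line_coordinate_nbhd u (vadd v (vscal (-1) u)) t eps Hvu Heps)
      as [N [HN [HNz HNt]]].
    destruct (Hseg u v Hu Hv _ (ex_intro _ t (conj Ht eq_refl)) (fun y => A y /\ N y))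
      as [w [[HAw HNw] [[t' [Ht' ->]] HUw]]].
    + apply vopen_inter; auto.
    + split; auto.
    + exists t'. auto.
Qed.

Lemma XR_segment_point_eq (p q : X * R) t :
  XR_add (XR_scal (1 - t) p) (XR_scal t q) = XR_add p (XR_scal t (XR_add q (XR_scal (-1) p))).
Proof.
  destruct p as [u r], q as [v s]. unfold XR_add, XR_scal; simpl.
  rewrite segment_point_eq. f_equal. ring.
Qed.

Lemma epi_U_segments_dense (f : X -> ER) (U : X -> Prop) :
  (forall x, f x <> ERninf) -> segments_dense vopen vadd vscal U -> convex_on X f U ->
  segments_dense (XR_open X) XR_add XR_scal (epi_U X f U).
Proof.
  intros Hf Hseg Hcv [u r] [v s] [Hu Hfu] [Hv Hfv] z [t [Ht ->]]. simpl in *.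
  intros W HW HWz.
  destruct (XR_open_nbhd_box W _ HW HWz) as [A [d [HA [HAx [Hd HAd]]]]].
  unfold XR_add, XR_scal in HAx, HAd. simpl in HAx, HAd.
  set (k := Rabs (s + -1 * r) + 1).
  assert (Hk : 0 < k) by (pose proof (Rabs_pos (s + -1 * r)); unfold k; lra).
  destruct (segments_dense_param U u v t A (d / k) Hseg Hu Hv Ht HA HAx)
    as [t' [Ht' [Htt [HUw HAw]]]]; [apply Rdiv_lt_0_compat; auto|].
  exists (vadd u (vscal t' (vadd v (vscal (-1) u))), r + t' * (s + -1 * r)). split.
  - apply HAd; auto.
    replace (r + t' * (s + -1 * r) - (r + t * (s + -1 * r)))
      with ((t' - t) * (s + -1 * r)) by ring.
    rewrite Rabs_mult.
    apply Rmult_lt_compat_r with (r := k) in Htt; auto.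
    unfold Rdiv in Htt. rewrite Rmult_assoc, Rinv_l, Rmult_1_r in Htt by lra.
    unfold k in Htt. pose proof (Rabs_pos (t' - t)). nra.
  - split; [exists t'; auto|split; simpl; auto].
    rewrite segment_point_eq in HUw |- *.
    pose proof (Hcv u v t' Hu Hv Ht' HUw) as Hc.
    destruct (f u) as [a| |] eqn:Ea; [|contradiction|contradiction (Hf u)].
    destruct (f v) as [b| |] eqn:Eb; [|contradiction|contradiction (Hf v)].
    simpl in Hc, Hfu, Hfv. eapply ERle_fin_trans; [exact Hc|].
    assert ((1 - t') * a <= (1 - t') * r) by (apply Rmult_le_compat_l; lra).
    assert (t' * b <= t' * s) by (apply Rmult_le_compat_l; lra).
    lra.
Qed.

(* Approximate both endpoints inside [S] and use continuity of the convex
   combination. *)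
Lemma XR_closure_convex (S : X * R -> Prop) :
  (forall p q t, S p -> S q -> 0 <= t <= 1 ->
     closure (XR_open X) S (XR_add (XR_scal (1 - t) p) (XR_scal t q))) ->
  convex_set XR_add XR_scal (closure (XR_open X) S).
Proof.
  intros HS [x1 r1] [x2 r2] t Hp Hq Ht W HW HWz.
  destruct (XR_open_nbhd_box W _ HW HWz) as [A [d [HA [HAx [Hd HAd]]]]].
  unfold XR_add, XR_scal in HAx, HAd. simpl in HAx, HAd.
  destruct (vcomb_continuous (1 - t) t x1 x2 A HA HAx)
    as [A1 [A2 [HA1 [HA2 [HA1x [HA2y HA12]]]]]].
  destruct (Hp (fun p => A1 (fst p) /\ Rabs (snd p - r1) < d / 2))
    as [[a1 b1] [[Ha1 Hb1] Hp1]].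
  { apply (XR_open_box A1 (fun b => Rabs (b - r1) < d / 2)); auto using R_open_ball. }
  { simpl. rewrite Rminus_diag, Rabs_R0. split; auto; lra. }
  destruct (Hq (fun p => A2 (fst p) /\ Rabs (snd p - r2) < d / 2))
    as [[a2 b2] [[Ha2 Hb2] Hp2]].
  { apply (XR_open_box A2 (fun b => Rabs (b - r2) < d / 2)); auto using R_open_ball. }
  { simpl. rewrite Rminus_diag, Rabs_R0. split; auto; lra. }
  apply (HS _ _ t Hp1 Hp2 Ht); auto.
  unfold XR_add, XR_scal; simpl in *. apply HAd; auto.
  apply Rabs_def2 in Hb1. apply Rabs_def2 in Hb2. apply Rabs_def1.
  - assert ((1 - t) * (b1 - r1) <= (1 - t) * (d / 2)) by (apply Rmult_le_compat_l; lra).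
    assert (t * (b2 - r2) <= t * (d / 2)) by (apply Rmult_le_compat_l; lra).
    lra.
  - assert ((1 - t) * - (d / 2) <= (1 - t) * (b1 - r1)) by (apply Rmult_le_compat_l; lra).
    assert (t * - (d / 2) <= t * (b2 - r2)) by (apply Rmult_le_compat_l; lra).
    lra.
Qed.

Lemma XR_closure_convex_of_segments_dense (S : X * R -> Prop) :
  segments_dense (XR_open X) XR_add XR_scal S ->
  convex_set XR_add XR_scal (closure (XR_open X) S).
Proof.
  intros HS. apply XR_closure_convex. intros p q t Hp Hq Ht.
  eapply closure_mono; [|apply (HS p q Hp Hq)].
  - intros w [_ Hw]. exact Hw.
  - exists t. split; auto. apply XR_segment_point_eq.
Qed.

End SegmentDensity.

(** * The envelope [fbar f U] *)

Section Envelope.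
Variable X : HLCTVS.
Variables (f : X -> ER) (U : X -> Prop).

Local Notation cl_epi_U := (closure (XR_open X) (epi_U X f U)).

Lemma fbar_le_of_closure x r : cl_epi_U (x, r) -> ERle (fbar X f U x) (ERfin r).
Proof. intros H. apply ERinf_lb. exists r. auto. Qed.

Lemma le_fbar x m :
  (forall r, cl_epi_U (x, r) -> ERle m (ERfin r)) -> ERle m (fbar X f U x).
Proof. intros H. apply ERinf_glb. intros s [r [-> Hr]]. auto. Qed.

(* A basic open box around (x, c) missing [epi_U f U] also keeps the closure at
   height [>= c + d] over its base, since [epi_U f U] is closed upwards. *)
Lemma not_closure_epi_U_nbhd x c : ~ cl_epi_U (x, c) ->
  exists A d, vopen A /\ A x /\ 0 < d /\
    forall y s, A y -> cl_epi_U (y, s) -> c + d <= s.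
Proof.
  intros Hn.
  apply not_all_ex_not in Hn as [W Hn].
  apply imply_to_and in Hn as [HW Hn]. apply imply_to_and in Hn as [HWx Hn].
  destruct (XR_open_nbhd_box W (x, c) HW HWx) as [A [d [HA [HAx [Hd HAd]]]]].
  exists A, d. repeat split; auto.
  intros y s Hy Hcl. apply Rnot_lt_le. intros Hs.
  destruct (Hcl (fun p => A (fst p) /\ snd p < c + d)) as [[a b] [[Ha Hb] [HUa Hfa]]].
  { apply (XR_open_box A (fun b => b < c + d)); auto using R_open_lt. }
  { split; auto. }
  apply Hn. exists (a, Rmax b c). split.
  - apply HAd; auto. simpl in Hb |- *. unfold Rmax; destruct (Rle_dec b c);
      rewrite Rabs_right; lra.
  - split; auto. eapply ERle_fin_trans; [exact Hfa|apply Rmax_l].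
Qed.

Lemma fbar_gt_nbhd x c : ERlt (ERfin c) (fbar X f U x) ->
  exists A, vopen A /\ A x /\ forall y, A y -> ERle (ERfin c) (fbar X f U y).
Proof.
  intros [Hle Hne].
  destruct (not_closure_epi_U_nbhd x c) as [A [d [HA [HAx [Hd HAd]]]]].
  { intros Hc. apply Hne, ERle_antisym; auto. apply fbar_le_of_closure, Hc. }
  exists A. repeat split; auto. intros y Hy. apply le_fbar. intros r Hr.
  simpl. pose proof (HAd y r Hy Hr). lra.
Qed.

Lemma closure_epi_U_of_fbar_le x r :
  ERle (fbar X f U x) (ERfin r) -> cl_epi_U (x, r).
Proof.
  intros H. apply NNPP. intros Hn.
  destruct (not_closure_epi_U_nbhd x r Hn) as [A [d [HA [HAx [Hd HAd]]]]].
  assert (Hrd : ERle (ERfin (r + d)) (fbar X f U x)).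
  { apply le_fbar. intros s Hs. simpl. eapply HAd; eauto. }
  pose proof (ERle_trans _ _ _ Hrd H). simpl in *. lra.
Qed.

Lemma fbar_lsc : lsc_on X (fbar X f U) (fun _ => True).
Proof.
  intros x _ I le u Hdir _ Hconv. apply ERle_approx_below. intros c Hc.
  destruct (fbar_gt_nbhd x c Hc) as [A [HA [HAx HAy]]].
  destruct (Hconv A HA HAx) as [i0 Hi0].
  apply (le_net_liminf le _ _ i0). auto.
Qed.

Lemma closure_epi_U_net x (r : nat -> R) :
  (forall n, cl_epi_U (x, r n)) ->
  exists (I : Type) (le : I -> I -> Prop) (u : I -> X) (m : I -> nat),
    directed le /\ (forall i, U (u i)) /\ net_conv le vopen u x /\
    (forall i, ERle (f (u i)) (ERfin (r (m i) + / INR (S (m i))))) /\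
    (forall N, exists i0, forall i, le i0 i -> (N <= m i)%nat).
Proof.
  intros Hcl.
  assert (Hpick : forall i : nbhd_index x, exists a, U a /\ ni_set i a /\
     ERle (f a) (ERfin (r (ni_level i) + / INR (S (ni_level i))))).
  { intros [W n HW HWx]; simpl.
    destruct (Hcl n (fun p => W (fst p) /\ Rabs (snd p - r n) < / INR (S n)))
      as [[a b] [[Ha Hb] [HUa Hfa]]].
    - apply (XR_open_box W (fun b => Rabs (b - r n) < / INR (S n))); auto using R_open_ball.
    - simpl. split; auto. rewrite Rminus_diag, Rabs_R0. apply inv_INR_S_pos.
    - simpl in *. exists a. repeat split; auto. eapply ERle_fin_trans; eauto.
      pose proof (Rle_abs (b - r n)). lra. }
  apply choice in Hpick as [u Hu].
  exists (nbhd_index x), (nbhd_index_le x), u, ni_level.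
  split; [|split; [|split; [|split]]].
  - apply nbhd_index_directed.
  - intros i. apply Hu.
  - apply nbhd_index_net_conv. intros i. apply Hu.
  - intros i. apply Hu.
  - apply nbhd_index_level_unbounded.
Qed.

Lemma closure_epi_U_liminf x r : cl_epi_U (x, r) ->
  exists (I : Type) (le : I -> I -> Prop) (u : I -> X),
    directed le /\ (forall i, U (u i)) /\ net_conv le vopen u x /\
    ERle (net_liminf le (fun i => f (u i))) (ERfin r).
Proof.
  intros Hcl.
  destruct (closure_epi_U_net x (fun _ => r) (fun _ => Hcl))
    as [I [le [u [m [Hdir [HU [Hconv [Hf Hm]]]]]]]].
  exists I, le, u. split; [|split; [|split]]; auto.
  apply net_liminf_le. intros i. apply ERle_approx_above. intros c [Hc Hne].
  assert (Hrc : r < c) by (destruct Hc; auto; subst; congruence).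
  destruct (inv_INR_S_lt (c - r)) as [N HN]; [lra|].
  destruct (eventually_and le _ _ Hdir (ex_intro _ i (fun j (H : le i j) => H)) (Hm N))
    as [k Hk].
  destruct Hdir as [_ [Hrefl _]]. destruct (Hk k (Hrefl k)) as [Hik HkN].
  eapply ERle_trans; [apply ERinf_lb; exists k; eauto|].
  eapply ERle_fin_trans; [apply Hf|].
  pose proof (inv_INR_S_le _ _ HkN). lra.
Qed.

Section FiniteBelow.
Hypothesis f_not_ninf : forall x, f x <> ERninf.

Lemma fbar_le_f u : U u -> ERle (fbar X f U u) (f u).
Proof.
  intros Hu. destruct (f u) as [y| |] eqn:Efu; [|apply ERle_pinf|contradiction (f_not_ninf u)].
  apply fbar_le_of_closure, closure_incl. split; simpl; auto. rewrite Efu. simpl. lra.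
Qed.

Lemma fbar_graphically_dense : (forall u, U u -> dom X f u) ->
  graphically_dense X (fbar X f U) U.
Proof.
  intros HUdom. split.
  - intros u Hu Hpinf. apply (HUdom u Hu), ERpinf_le. rewrite <- Hpinf. apply fbar_le_f, Hu.
  - intros x Hx.
    destruct (closure_epi_U_net x (upper_approx (fbar X f U x)))
      as [I [le [u [m [Hdir [HU [Hconv [Hf Hm]]]]]]]].
    { intros n. apply closure_epi_U_of_fbar_le, upper_approx_ge, Hx. }
    exists I, le, u. split; [|split; [|split]]; auto.
    apply (ER_net_conv_squeeze le _ _ m Hdir Hx); auto.
    + intros c Hc. destruct (fbar_gt_nbhd x c Hc) as [A [HA [HAx HAy]]].
      destruct (Hconv A HA HAx) as [i0 Hi0]. exists i0. auto.
    + intros i. eapply ERle_trans; [apply fbar_le_f, HU|apply Hf].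
Qed.

Lemma inf_f_U_eq_inf_fbar :
  ERinf (fun s => exists u, U u /\ s = f u) = ERinf (fun s => exists x, s = fbar X f U x).
Proof.
  apply ERle_antisym.
  - apply ERinf_glb. intros s [x ->]. apply le_fbar. intros r Hr.
    apply ERle_approx_above. intros c [Hc Hne].
    destruct (Hr (fun p => (fun _ : X => True) (fst p) /\ snd p < c))
      as [[a b] [[_ Hb] [Ha Hfa]]].
    + apply (XR_open_box (fun _ => True) (fun b => b < c)); auto using vopen_full, R_open_lt.
    + simpl. split; auto. destruct Hc; auto. subst; congruence.
    + simpl in *. eapply ERle_trans; [apply ERinf_lb; exists a; eauto|].
      eapply ERle_fin_trans; eauto. lra.
  - apply ERinf_glb. intros s [u [Hu ->]].
    eapply ERle_trans; [apply ERinf_lb; exists u; reflexivity|apply fbar_le_f, Hu].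
Qed.

Lemma f_eq_fbar_of_lsc_on_U : lsc_on X f U -> forall u, U u -> f u = fbar X f U u.
Proof.
  intros Hlsc u Hu. apply ERle_antisym; [|apply fbar_le_f, Hu].
  apply le_fbar. intros r Hr.
  destruct (closure_epi_U_liminf u r Hr) as [I [le [v [Hdir [HU [Hconv Hlim]]]]]].
  eapply ERle_trans; [|exact Hlim]. apply (Hlsc u Hu I le v); auto.
Qed.

Lemma f_le_fbar : lsc_on X f (fun _ => True) -> forall x, ERle (f x) (fbar X f U x).
Proof.
  intros Hlsc x. apply le_fbar. intros r Hr.
  destruct (closure_epi_U_liminf x r Hr) as [I [le [v [Hdir [HU [Hconv Hlim]]]]]].
  eapply ERle_trans; [|exact Hlim]. apply (Hlsc x Logic.I I le v); auto.
Qed.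

Lemma dom_fbar_dom : lsc_on X f (fun _ => True) ->
  forall x, dom X (fbar X f U) x -> dom X f x.
Proof. intros Hlsc x Hx Hfx. apply Hx, ERpinf_le. rewrite <- Hfx. apply f_le_fbar, Hlsc. Qed.

Lemma fbar_eq_f_iff_graphically_dense : (forall u, U u -> dom X f u) ->
  lsc_on X f (fun _ => True) ->
  ((forall x, fbar X f U x = f x) <-> graphically_dense X f U).
Proof.
  intros HUdom Hlsc. split.
  - intros Heq. assert (E : fbar X f U = f) by (apply functional_extensionality; auto).
    rewrite <- E. apply fbar_graphically_dense, HUdom.
  - intros [_ Hdense] x. apply ERle_antisym; [|apply f_le_fbar, Hlsc].
    destruct (f x) as [y| |] eqn:Efx; [|apply ERle_pinf|contradiction (f_not_ninf x)].
    apply fbar_le_of_closure. intros W HW HWx.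
    destruct (XR_open_nbhd_box W (x, y) HW HWx) as [A [d [HA [HAx [Hd HAd]]]]].
    destruct (Hdense x) as [I [le [u [Hdir [HU [Hconv Hfu]]]]]];
      [unfold dom; rewrite Efx; discriminate|].
    rewrite Efx in Hfu.
    destruct (eventually_and le _ _ Hdir (Hconv A HA HAx) (Hfu d Hd)) as [k Hk].
    destruct Hdir as [_ [Hrefl _]]. destruct (Hk k (Hrefl k)) as [HAk [z [Hz Hzy]]].
    exists (u k, z). split; [apply HAd; auto|].
    split; simpl; auto. rewrite Hz. simpl. lra.
Qed.

End FiniteBelow.

Lemma fbar_convex : convex_set XR_add XR_scal cl_epi_U -> convex_fun X (fbar X f U).
Proof.
  intros Hcc u v t _ _ Ht _. apply ERle_approx_above. intros c Hc.
  destruct (ERconvex_comb_lt_fin _ _ t c Ht Hc) as [p [q [Hup [Hvq Hpq]]]].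
  apply closure_epi_U_of_fbar_le in Hup, Hvq.
  pose proof (Hcc _ _ t Hup Hvq Ht) as H. unfold XR_add, XR_scal in H; simpl in H.
  eapply ERle_fin_trans; [apply fbar_le_of_closure, H|exact Hpq].
Qed.

Lemma epi_fbar_self_segment_dense :
  segments_dense (XR_open X) XR_add XR_scal (epi_U X f U) ->
  self_segment_dense (XR_open X) XR_add XR_scal (epi X (fbar X f U)) (epi_U X f U).
Proof.
  intros Hseg. pose proof (XR_closure_convex_of_segments_dense _ Hseg) as Hcc.
  split; [|split; [|split]]; auto.
  - intros [x r] [y s] t Hx Hy Ht. apply closure_epi_U_of_fbar_le in Hx, Hy.
    apply fbar_le_of_closure, (Hcc _ _ t Hx Hy Ht).
  - intros [x r] Hxr. apply fbar_le_of_closure, closure_incl, Hxr.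
  - intros [x r] Hxr. apply closure_epi_U_of_fbar_le, Hxr.
Qed.

End Envelope.

Theorem mainTheorem4 (X : HLCTVS) (f : X -> ER) (U : X -> Prop)
  (Hproper : proper X f)
  (HUdom : forall u, U u -> dom X f u)
  (HUdense : forall x, dom X f x -> closure vopen U x) :
  (* (a) *)
  (lsc_on X (fbar X f U) (fun _ => True) /\
   graphically_dense X (fbar X f U) U /\
   ERinf (fun s => exists u, U u /\ s = f u) =
   ERinf (fun s => exists x, s = fbar X f U x)) /\
  (* (b) *)
  (lsc_on X f U ->
     (forall u, U u -> f u = fbar X f U u) /\
     (lsc_on X f (fun _ => True) ->
        (forall x, dom X (fbar X f U) x -> dom X f x) /\
        (forall x, ERle (f x) (fbar X f U x)) /\
        ((forall x, fbar X f U x = f x) <-> graphically_dense X f U))) /\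
  (* (c) *)
  (convex_set vadd vscal (dom X f) ->
   self_segment_dense vopen vadd vscal (dom X f) U ->
   convex_on X f U ->
     convex_fun X (fbar X f U) /\
     self_segment_dense (XR_open X) XR_add XR_scal (epi X (fbar X f U)) (epi_U X f U)).
Proof.
  destruct Hproper as [_ Hf].
  split; [|split].
  - split; [apply fbar_lsc|].
    split; [apply fbar_graphically_dense|apply inf_f_U_eq_inf_fbar]; auto.
  - intros HlscU. split; [apply f_eq_fbar_of_lsc_on_U; auto|].
    intros Hlsc. split; [apply dom_fbar_dom, Hlsc|].
    split; [apply f_le_fbar, Hlsc|apply fbar_eq_f_iff_graphically_dense; auto].
  - intros _ [_ [_ [_ Hseg]]] Hcv. split.
    + apply fbar_convex, XR_closure_convex_of_segments_dense, epi_U_segments_dense; auto.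
    + apply epi_fbar_self_segment_dense, epi_U_segments_dense; auto.
Qed.
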